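(* Let $\mathfrak L$ be a left-resolving $\lambda$-graph system over a finite alphabet $\Sigma$ which satisfies condition (I). Then $\mathfrak L$ is essentially free, i.e. for all $m\neq n$ in $\mathbb Z_+$ the set $X_{m,n}=\{x\in X_{\mathfrak L}\mid \sigma_{\mathfrak L}^m(x)=\sigma_{\mathfrak L}^n(x)\}$ has empty interior in $X_{\mathfrak L}$.
   Context: $\mathbb Z_+=\{0,1,2,\dots\}$, $\mathbb N=\{1,2,\dots\}$. A $\lambda$-graph system $\mathfrak L=(V,E,\lambda,\iota)$ over a finite alphabet $\Sigma$ consists of finite nonempty pairwise disjoint vertex sets $V_l$ ($l\in\mathbb Z_+$), $V=\bigcup_l V_l$; finite pairwise disjoint edge sets $E_{l,l+1}$, $E=\bigcup_l E_{l,l+1}$, each $e\in E_{l,l+1}$ having a source $s(e)\in V_l$ and a terminal $t(e)\in V_{l+1}$; a labeling map $\lambda:E\to\Sigma$; and surjections $\iota=\iota_{l,l+1}:V_{l+1}\to V_l$; such that every vertex is the source of some edge, every vertex in $V_l$ with $l\ge1$ is the terminal of some edge, and (local property) for all $l\ge1$, $u\in V_{l-1}$, $v\in V_{l+1}$ there is a label-preserving bijection between $\{e\in E_{l,l+1}: \iota(s(e))=u,\ t(e)=v\}$ and $\{e\in E_{l-1,l}: s(e)=u,\ t(e)=\iota(v)\}$. It is left-resolving if $e,f\in E$, $t(e)=t(f)$, $\lambda(e)=\lambda(f)$ imply $e=f$. $\Omega_{\mathfrak L}=\{(u^l)_{l\in\mathbb Z_+}\in\prod_l V_l: \iota(u^{l+1})=u^l\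 \forall l\}$ with the projective limit topology. $E_{\mathfrak L}$ is the set of $(u,\alpha,w)\in\Omega_{\mathfrak L}\times\Sigma\times\Omega_{\mathfrak L}$ such that for each $l$ there is $e\in E_{l,l+1}$ with $s(e)=u^l$, $t(e)=w^{l+1}$, $\lambda(e)=\alpha$. $X_{\mathfrak L}$ is the set of sequences $(\alpha_i,u_i)_{i\in\mathbb N}\in\prod_{i\in\mathbb N}(\Sigma\times\Omega_{\mathfrak L})$ with $(u_i,\alpha_{i+1},u_{i+1})\in E_{\mathfrak L}$ for all $i\in\mathbb N$ and $(u_0,\alpha_1,u_1)\in E_{\mathfrak L}$ for some $u_0\in\Omega_{\mathfrak L}$, with the relative product topology; $\sigma_{\mathfrak L}((\alpha_i,u_i)_{i\in\mathbb N})=(\alpha_{i+1},u_{i+1})_{i\in\mathbb N}$. Condition (I): for every $l\in\mathbb Z_+$ and $v\in V_l$, the set $\Gamma^+_\infty(v)\subset\Sigma^{\mathbb N}$ of all sequences $(\alpha_1,\alpha_2,\dots)$ for which there are edges $e_{n,n+1}\in E_{n,n+1}$ ($n\ge l$) with $s(e_{l,l+1})=v$, $t(e_{n,n+1})=s(e_{n+1,n+2})$ and $\lambda(e_{n,n+1})=\alpha_{n-l+1}$ for all $n\ge l$, contains at least two distinct sequences. *)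

From mathcomp Require Import all_boot.
Set Implicit Arguments.
Unset Strict Implicit.
Unset Printing Implicit Defensive.

(* Raw data of a lambda-graph system over the alphabet Sigma.
   V l, Edge l are the finite sets V_l, E_{l,l+1} (disjointness is automatic,
   as they live in different types). *)
Record lgraph (Sigma : finType) := LGraph {
  V    : nat -> finType;
  Edge : nat -> finType;
  src  : forall l, Edge l -> V l;
  trm  : forall l, Edge l -> V l.+1;
  lab  : forall l, Edge l -> Sigma;
  iota : forall l, V l.+1 -> V l }.

Arguments V {Sigma} _ _ : rename.
Arguments Edge {Sigma} _ _ : rename.
Arguments src {Sigma} _ {_} _ : rename.
Arguments trm {Sigma} _ {_} _ : rename.
Arguments lab {Sigma} _ {_} _ : rename.
Arguments iota {Sigma} _ {_} _ : rename.

Section LGS.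
Variables (Sigma : finType) (g : lgraph Sigma).

Definition is_lambda_graph_system : Prop :=
  [/\ (forall l, 0 < #|V g l|),
      (forall l (u : V g l), exists v : V g l.+1, iota g v = u),
      (forall l (v : V g l), exists e : Edge g l, src g e = v),
      (forall l (v : V g l.+1), exists e : Edge g l, trm g e = v) &
      (* local property, for level l = k.+1 >= 1, u in V_k, v in V_{k+2} *)
      (forall k (u : V g k) (v : V g k.+2),
         exists f : {e : Edge g k.+1 | (iota g (src g e) == u) && (trm g e == v)} ->
                    {e : Edge g k    | (src g e == u) && (trm g e == iota g v)},
           bijective f /\ forall e, lab g (val (f e)) = lab g (val e))].

Definition left_resolving : Prop :=
  forall l (e f : Edge g l), trm g e = trm g f -> lab g e = lab g f -> e = f.

(* Gamma^+_infty(v) for v in V_l; the n-th edge lives in E_{l+n,l+n+1}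
   (written Nat.add n l so that successor levels are convertible). *)
Definition Gamma_inf (l : nat) (v : V g l) (a : nat -> Sigma) : Prop :=
  exists e : forall n, Edge g (Nat.add n l),
    [/\ src g (e 0) = v,
        (forall n, trm g (e n) = src g (e n.+1)) &
        (forall n, lab g (e n) = a n)].

Definition condition_I : Prop :=
  forall l (v : V g l), exists a b, a <> b /\ Gamma_inf v a /\ Gamma_inf v b.

Definition vseq := forall l, V g l.
Definition in_Omega (u : vseq) : Prop := forall l, iota g (u l.+1) = u l.

Definition E_L (u : vseq) (a : Sigma) (w : vseq) : Prop :=
  forall l, exists e : Edge g l, [/\ src g e = u l, trm g e = w l.+1 & lab g e = a].

(* Points of the ambient product prod_{i in N} (Sigma x prod_l V_l);
   index i : nat here stands for i+1 in the paper. *)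
Definition point := nat -> (Sigma * vseq)%type.

Definition in_XL (x : point) : Prop :=
  (forall i, in_Omega (x i).2) /\
  (forall i, E_L (x i).2 (x i.+1).1 (x i.+1).2) /\
  (exists u0, in_Omega u0 /\ E_L u0 (x 0).1 (x 0).2).

Definition sigmaL (x : point) : point := fun i => x i.+1.

(* Basic neighbourhoods of the (relative) product topology: agreement of the
   labels and of the vertex coordinates of levels <= L in the first N slots. *)
Definition near (N L : nat) (x y : point) : Prop :=
  forall i, i < N -> (y i).1 = (x i).1 /\ forall l, l <= L -> (y i).2 l = (x i).2 l.

Definition open_in_XL (U : point -> Prop) : Prop :=
  (forall x, U x -> in_XL x) /\
  (forall x, U x -> exists N L, forall y, in_XL y -> near N L x y -> U y).

Definition X_mn (m n : nat) (x : point) : Prop :=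
  in_XL x /\ iter m sigmaL x = iter n sigmaL x.

Definition empty_interior (A : point -> Prop) : Prop :=
  forall U, open_in_XL U -> (forall x, U x -> A x) -> forall x, ~ U x.

Definition essentially_free : Prop :=
  forall m n : nat, m <> n -> empty_interior (X_mn m n).

End LGS.

From Stdlib Require Import Classical ClassicalEpsilon ChoiceFacts FunctionalExtensionality Lia.
From Pilot Require Import Defs.
From mathcomp Require Import all_boot zify.

Set Implicit Arguments.
Unset Strict Implicit.
Unset Printing Implicit Defensive.

(* Suppose an open set inside X_{m,n} (m < n) contains x, together with all points of X_L
   agreeing with x on the first N slots up to level L.  By condition (I) the vertex of x in
   slot K = N + n, at level K + L + 1, follows some label sequence c other than the labels of x
   after slot K.  Koenig's lemma turns c into an infinite path of Omega_L starting at that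
   vertex, and left-resolvingness (with the local property) lets us pull this path back along
   the labels of x, giving a point y of X_L that agrees with x on the neighbourhood.  So y is
   (m,n)-periodic as well; two periodic label sequences agreeing on the first K + 1 >= n slots
   coincide, hence c is the tail of x after slot K, a contradiction. *)

Lemma dependent_choice : DependentFunctionalChoice.
Proof. exact: non_dep_dep_functional_choice ClassicalEpsilon.choice. Qed.

Lemma backward_extension (T : Type) (P : nat -> T -> Prop) (R : nat -> T -> T -> Prop)
    H (z : nat -> T) :
  P H (z H) -> (forall j u, j < H -> P j.+1 u -> exists2 u', P j u' & R j u' u) ->
  exists w : nat -> T, [/\ forall j, H <= j -> w j = z j,
    forall j, j <= H -> P j (w j) & forall j, j < H -> R j (w j) (w j.+1)].
Proof.
elim: H P R z => [|H IH] P R z PH step.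
  by exists z; split=> // j; rewrite leqn0 => /eqP->.
have [w [wz Pw Rw]] := IH (fun j => P j.+1) (fun j => R j.+1) (fun j => z j.+1) PH
  (fun j u ltjH => step j.+1 u ltjH).
have [u Pu Ru] := step 0 (w 0) (ltn0Sn _) (Pw 0 (leq0n _)).
exists (fun j => if j is j'.+1 then w j' else u); split.
- by case=> // j; apply: wz.
- by case.
- by case=> // j; apply: Rw.
Qed.

Lemma periodic_eq_of_prefix (T : Type) (f h : nat -> T) m n K : m < n -> n <= K ->
  (forall j, f (j + m) = f (j + n)) -> (forall j, h (j + m) = h (j + n)) ->
  (forall i, i <= K -> f i = h i) -> f =1 h.
Proof.
move=> ltmn leqnK fper hper prefix i.
elim: i {-2}i (leqnn i) => [|i IH] k leki; first by apply: prefix; lia.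
case: (leqP k K) => [lekK|ltKk]; first exact: prefix.
have -> : k = (k - n) + n by lia.
rewrite -fper -hper; apply: IH; lia.
Qed.

Lemma finite_uniform_bound (F : finType) (Q : F -> nat -> Prop) :
  (forall b, exists M, Q b M) -> (forall b M M', M <= M' -> Q b M -> Q b M') ->
  exists M, forall b, Q b M.
Proof.
move=> bounded Qmono.
have [f Qf] := ClassicalEpsilon.choice Q bounded.
by exists (\max_(b : F) f b) => b; apply: Qmono (Qf b); apply: leq_bigmax.
Qed.

Lemma koenig (T : nat -> finType) (R : forall h, T h -> T h.+1 -> Prop) (r : T 0) :
  (forall H, exists q : forall i, T i, q 0 = r /\ forall j, j < H -> R j (q j) (q j.+1)) ->
  exists q : forall i, T i, q 0 = r /\ forall j, R j (q j) (q j.+1).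
Proof.
move=> paths.
pose extendable h (a : T h) := forall H, exists q : forall i, T i,
  q h = a /\ forall j, h <= j < h + H -> R j (q j) (q j.+1).
have ext_r : extendable 0 r.
  by move=> H; have [q [q0 Rq]] := paths H; exists q; split=> // j /andP[_]; apply: Rq.
have ext_step h (a : T h) : extendable h a -> exists b, R h a b /\ extendable h.+1 b.
  move=> ext_a; apply: NNPP => no_b.
  have [M noM] : exists M, forall b, R h a b -> ~ exists q : forall i, T i,
      q h.+1 = b /\ forall j, h.+1 <= j < h.+1 + M -> R j (q j) (q j.+1).
    apply: finite_uniform_bound => [b|b M M' leMM' noMb Rb [q [qb Rq]]].
      case: (classic (R h a b)) => [Rb|nRb]; last by exists 0.
      have /not_all_ex_not[M noM] : ~ extendable h.+1 b by move=> ext_b; apply: no_b; exists b.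
      by exists M.
    by apply: (noMb Rb); exists q; split=> // j /andP[lej ltj]; apply: Rq; lia.
  have [q [qa Rq]] := ext_a M.+1.
  have Rqh : R h a (q h.+1) by rewrite -qa; apply: Rq; lia.
  by apply: (noM _ Rqh); exists q; split=> // j /andP[lej ltj]; apply: Rq; lia.
pose next h (s : {a : T h | extendable h a}) :=
  constructive_indefinite_description _ (ext_step h _ (proj2_sig s)).
pose fix walk h : {a : T h | extendable h a} :=
  match h with
  | 0 => exist _ r ext_r
  | h'.+1 => exist _ (proj1_sig (next h' (walk h'))) (proj2 (proj2_sig (next h' (walk h'))))
  end.
exists (fun i => proj1_sig (walk i)); split=> // j.
exact: proj1 (proj2_sig (next j (walk j))).
Qed.

Definition lgraph_shift (Sigma : finType) (g : lgraph Sigma) : lgraph Sigma :=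
  LGraph (fun l (e : Edge g l.+1) => src g e) (fun l (e : Edge g l.+1) => trm g e)
    (fun l (e : Edge g l.+1) => lab g e) (fun l (v : V g l.+2) => Defs.iota g v).

Lemma omega_through (Sigma : finType) k (g : lgraph Sigma) :
  (forall l (u : V g l), exists v : V g l.+1, Defs.iota g v = u) ->
  forall z : V g k, exists u : vseq g, in_Omega u /\ u k = z.
Proof.
elim: k g => [|k IH] g iota_onto z.
  have [lift liftK] : exists lift : forall l, V g l -> V g l.+1,
      forall l u, Defs.iota g (lift l u) = u.
    apply: (@dependent_choice nat (fun l => V g l -> V g l.+1)
      (fun l f => forall u, Defs.iota g (f u) = u)) => l.
    exact: ClassicalEpsilon.choice (iota_onto l).
  pose fix tower l : V g l := if l is l'.+1 then lift l' (tower l') else z.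
  by exists tower; split=> // l /=; rewrite liftK.
have [u [Ou uk]] := IH (lgraph_shift g) (fun l => iota_onto l.+1) z.
exists (fun l => if l is l'.+1 then u l' else Defs.iota g (u 0)).
by split=> // -[|l] //=; apply: Ou.
Qed.

Lemma omega_agree_below (Sigma : finType) (g : lgraph Sigma) (u u' : vseq g) :
  in_Omega u -> in_Omega u' -> forall k, u k = u' k -> forall k', k' <= k -> u k' = u' k'.
Proof.
move=> Ou Ou'.
suff agree d k' : u (k' + d) = u' (k' + d) -> u k' = u' k'.
  by move=> k ukk k' lek'k; apply: (agree (k - k')); rewrite subnKC.
elim: d k' => [|d IH] k'; first by rewrite addn0.
by rewrite addnS => /(f_equal (Defs.iota g)); rewrite Ou Ou'; apply: IH.
Qed.

Section LambdaGraphSystem.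
Variables (Sigma : finType) (g : lgraph Sigma).
Hypothesis lgs : is_lambda_graph_system g.
Hypothesis lres : left_resolving g.

Let iota_onto l (u : V g l) : exists v : V g l.+1, Defs.iota g v = u.
Proof. by case: lgs => _ onto _ _ _; apply: onto. Qed.

Lemma edge_descend k (f : Edge g k.+1) :
  exists e : Edge g k, [/\ src g e = Defs.iota g (src g f),
    trm g e = Defs.iota g (trm g f) & lab g e = lab g f].
Proof.
case: lgs => _ _ _ _ /(_ k (Defs.iota g (src g f)) (trm g f)) [F [_ labF]].
have f_in : (Defs.iota g (src g f) == Defs.iota g (src g f)) && (trm g f == trm g f).
  by rewrite !eqxx.
move: (labF (exist _ f f_in)); case: (F _) => e /= /andP[/eqP srce /eqP trme] labe.
by exists e.
Qed.

Lemma edge_ascend k (e : Edge g k) (v : V g k.+2) : trm g e = Defs.iota g v ->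
  exists f : Edge g k.+1, [/\ Defs.iota g (src g f) = src g e, trm g f = v & lab g f = lab g e].
Proof.
move=> trme.
case: lgs => _ _ _ _ /(_ k (src g e) v) [F [[G FK GK] labF]].
have e_in : (src g e == src g e) && (trm g e == Defs.iota g v) by rewrite trme !eqxx.
move: (labF (G (exist _ e e_in))); rewrite GK /=.
by case: (G _) => f /= /andP[/eqP srcf /eqP trmf] labf; exists f.
Qed.

Lemma labelled_edges_all_levels (w : vseq g) a : in_Omega w ->
  (exists k (e : Edge g k), trm g e = w k.+1 /\ lab g e = a) ->
  forall k, exists e : Edge g k, trm g e = w k.+1 /\ lab g e = a.
Proof.
move=> Ow [k0 [e0 [trme0 labe0]]].
pose P k := exists e : Edge g k, trm g e = w k.+1 /\ lab g e = a.
have down d k : P (k + d) -> P k.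
  elim: d k => [|d IH] k; first by rewrite addn0.
  rewrite addnS => -[f [trmf labf]]; apply: IH.
  have [e [_ trme labe]] := edge_descend f.
  by exists e; rewrite trme trmf Ow labe labf.
have up d : P (k0 + d).
  elim: d => [|d [e [trme labe]]]; first by rewrite addn0; exists e0.
  rewrite -Ow in trme; have [f [_ trmf labf]] := edge_ascend trme.
  by rewrite addnS; exists f; rewrite labf.
move=> k; case: (leqP k k0) => [lekk0|ltk0k].
  by apply: (down (k0 - k)); rewrite subnKC //; exists e0.
by rewrite -(subnKC (ltnW ltk0k)); apply: up.
Qed.

Lemma omega_predecessor (w : vseq g) a k (e : Edge g k) :
  in_Omega w -> trm g e = w k.+1 -> lab g e = a ->
  exists u : vseq g, [/\ in_Omega u, E_L u a w & u k = src g e].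
Proof.
move=> Ow trme labe.
have [E E_in] := @dependent_choice nat (Edge g)
  (fun k f => trm g f = w k.+1 /\ lab g f = a)
  (labelled_edges_all_levels Ow (ex_intro _ k (ex_intro _ e (conj trme labe)))).
have E_uniq j (f : Edge g j) : trm g f = w j.+1 -> lab g f = a -> f = E j.
  by case: (E_in j) => trmE labE trmf labf; apply: lres; rewrite ?trmE ?labE.
exists (fun j => src g (E j)); split.
- move=> j; have [trmE labE] := E_in j.+1.
  have [f [srcf trmf labf]] := edge_descend (E j.+1).
  by rewrite -srcf (E_uniq j f) // ?trmf ?labf ?trmE ?labE ?Ow.
- by move=> j; have [trmE labE] := E_in j; exists (E j).
- by rewrite -(E_uniq k e).
Qed.

Lemma E_L_path_back_unique (c : nat -> Sigma) (W1 W2 : nat -> vseq g) d j k :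
  (forall i, j <= i < j + d -> E_L (W1 i) (c i) (W1 i.+1) /\ E_L (W2 i) (c i) (W2 i.+1)) ->
  W1 (j + d) (k + d) = W2 (j + d) (k + d) -> W1 j k = W2 j k.
Proof.
elim: d j k => [|d IH] j k steps; first by rewrite !addn0.
rewrite !addnS -!addSn => agree.
have agree1 : W1 j.+1 k.+1 = W2 j.+1 k.+1.
  by apply: (IH j.+1 k.+1) => // i /andP[ltji ltid]; apply: steps; lia.
have [/(_ k)[e1 [src1 trm1 lab1]] /(_ k)[e2 [src2 trm2 lab2]]] := steps j ltac:(lia).
by rewrite -src1 -src2 (@lres _ e1 e2) // ?trm1 ?lab1 ?trm2 ?lab2 ?agree1.
Qed.

Lemma Gamma_inf_prefix_path l (v : V g l) c : Gamma_inf v c -> forall H,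
  exists w : nat -> vseq g, [/\ forall j, j <= H -> in_Omega (w j),
    forall j, j < H -> E_L (w j) (c j) (w j.+1) & w 0 l = v].
Proof.
move=> [e [src0 chain labe]] H.
have [z [Oz zH]] := omega_through iota_onto (src g (e H)).
pose P j (u : vseq g) := in_Omega u /\ u (j + l) = src g (e j).
have step j u : j < H -> P j.+1 u -> exists2 u', P j u' & E_L u' (c j) u.
  move=> _ [Ou uj].
  have [u' [Ou' Eu' u'j]] := omega_predecessor Ou (etrans (chain j) (esym uj)) (labe j).
  by exists u'.
have [w [_ Pw Ew]] := backward_extension (z := fun _ => z) (conj Oz zH) step.
exists w; split=> // [j /Pw[]//|].
by have [_ ->] := Pw 0 (leq0n H).
Qed.

(* The levels of the spine grow twice as fast as the path index: pulling back from slot h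
   then pins down slot j at every level up to h - j, so the prefix paths converge. *)
Definition spine_step (c : nat -> Sigma) l h (a : V g (h.*2 + l)) (b : V g (h.+1.*2 + l)) :=
  exists f : Edge g (h.*2 + l).+1,
    [/\ Defs.iota g (src g f) = a, trm g f = b & lab g f = c h].

Lemma Gamma_inf_spine l (v : V g l) c : Gamma_inf v c ->
  exists q : forall h, V g (h.*2 + l), q 0 = v /\ forall h, spine_step c (q h) (q h.+1).
Proof.
move=> Gv; apply: (koenig (T := fun h => V g (h.*2 + l))) => H.
have [w [Ow Ew w0]] := Gamma_inf_prefix_path Gv H.
exists (fun h => w h (h.*2 + l)); split=> // j ltjH.
have [f [srcf trmf labf]] := Ew j ltjH (j.*2 + l).+1.
by exists f; rewrite srcf Ow //; apply: ltnW.
Qed.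

Section Spine.
Variables (c : nat -> Sigma) (l : nat) (q : forall h, V g (h.*2 + l)).
Hypothesis q_spine : forall h, spine_step c (q h) (q h.+1).

Lemma spine_prefix_path H : exists W : nat -> vseq g, [/\ forall j, in_Omega (W j),
  forall j, j < H -> E_L (W j) (c j) (W j.+1) & forall h, h <= H -> W h (h.*2 + l) = q h].
Proof.
have [z [Oz zH]] := omega_through iota_onto (q H).
pose P j (u : vseq g) := in_Omega u /\ u (j.*2 + l) = q j.
have step j u : j < H -> P j.+1 u -> exists2 u', P j u' & E_L u' (c j) u.
  move=> _ [Ou uj]; have [f [srcf trmf labf]] := q_spine j.
  have [u' [Ou' Eu' u'j]] := omega_predecessor Ou (etrans trmf (esym uj)) labf.
  by exists u'; first split; rewrite // -(Ou' (j.*2 + l)) u'j.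
have [W [Wz PW EW]] := backward_extension (z := fun _ => z) (conj Oz zH) step.
exists W; split=> // [j|h /PW[]//].
by case: (leqP j H) => [/PW[]//|/ltnW/Wz->].
Qed.

Lemma path_of_spine : exists w : nat -> vseq g, [/\ forall j, in_Omega (w j),
  forall j, E_L (w j) (c j) (w j.+1) & w 0 l = q 0].
Proof.
have [W W_spec] := ClassicalEpsilon.choice _ spine_prefix_path.
have coherent H1 H2 j k : j + k <= H1 -> j + k <= H2 -> W H1 j k = W H2 j k.
  move=> le1 le2; have [O1 E1 q1] := W_spec H1; have [O2 E2 q2] := W_spec H2.
  apply: (@E_L_path_back_unique c _ _ k) => [i /andP[lei lti]|].
    by split; [apply: E1|apply: E2]; lia.
  apply: (omega_agree_below (O1 _) (O2 _) (k := (j + k).*2 + l)); last by lia.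
  by rewrite q1 // q2.
exists (fun j k => W (j + k) j k); split.
- move=> j k /=; have [O _ _] := W_spec (j + k.+1).
  by rewrite O; apply: coherent; lia.
- move=> j k; have [_ E _] := W_spec (j.+1 + k.+1).
  have [e [srce trme labe]] := E j ltac:(lia) k.
  by exists e; rewrite srce trme; split=> //; apply: coherent; lia.
- by have [_ _ ->] := W_spec l.
Qed.

End Spine.

Lemma Gamma_inf_path l (v : V g l) c : Gamma_inf v c ->
  exists w : nat -> vseq g, [/\ forall j, in_Omega (w j),
    forall j, E_L (w j) (c j) (w j.+1) & w 0 l = v].
Proof.
move=> /Gamma_inf_spine[q [<- q_spine]].
exact: path_of_spine q_spine.
Qed.

(* Level L.+1 rather than L: the predecessor of y in slot 0 is found through level L + 1. *)
Lemma X_L_redirect (x : point g) K L c : in_XL x -> Gamma_inf ((x K).2 (K + L.+1)) c ->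
  exists y : point g, [/\ in_XL y, near K.+1 L x y & forall j, (y (K.+1 + j)).1 = c j].
Proof.
move=> [Ox [Ex [u0 [_ Eu0]]]] /Gamma_inf_path[w [Ow Ew w0]].
pose a j := if j <= K then (x j).1 else c (j - K.+1).
pose P j (u : vseq g) := in_Omega u /\ u (j + L.+1) = (x j).2 (j + L.+1).
have step j u : j < K -> P j.+1 u -> exists2 u', P j u' & E_L u' (a j.+1) u.
  move=> ltjK [Ou uj]; have [e [srce trme labe]] := Ex j (j + L.+1).
  have [u' [Ou' Eu' u'j]] := omega_predecessor Ou (etrans trme (esym uj)) labe.
  exists u'; first by split; rewrite // u'j.
  by rewrite /a ltjK.
have PK : P K (w (K - K)) by rewrite subnn.
have [Z [Zw PZ EZ]] := backward_extension (z := fun j => w (j - K)) PK step.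
exists (fun j => (a j, Z j)); split.
- split; [|split].
  + by move=> j; case: (leqP j K) => [/PZ[]//|/ltnW/Zw->]; apply: Ow.
  + move=> j; case: (ltnP j K) => [/EZ//|leKj].
    by rewrite /= !Zw ?(leqW leKj) // /a ltnNge leKj subSS subSn.
  + have [e [srce trme labe]] := Eu0 L.
    have [OZ0 Z0] := PZ 0 (leq0n K).
    have [u [Ou Eu _]] := omega_predecessor OZ0 (etrans trme (esym Z0)) labe.
    by exists u; split; rewrite // /a leq0n.
- move=> i ltiK; rewrite /= /a -ltnS ltiK; split=> // k lekL.
  have [OZ Zi] := PZ i ltiK.
  by apply: (omega_agree_below OZ (Ox i) Zi); lia.
- by move=> j; rewrite /a /= leqNgt ltnS leq_addr /= addKn.
Qed.

Lemma iter_sigmaL_eq (x : point g) m n :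
  iter m (@sigmaL _ g) x = iter n (@sigmaL _ g) x -> forall j, x (j + m) = x (j + n).
Proof.
have iter_sigmaL k i : iter k (@sigmaL _ g) x i = x (i + k).
  by elim: k i => [|k IH] i; rewrite ?addn0 // iterS /sigmaL IH addSnnS.
by move=> eq_mn j; rewrite -!iter_sigmaL eq_mn.
Qed.

Hypothesis condI : condition_I g.

Lemma X_mn_empty_interior_lt m n : m < n -> empty_interior (X_mn (g := g) m n).
Proof.
move=> ltmn U [_ U_open] U_X x Ux.
have [N [L nearU]] := U_open x Ux.
have [Xx xper] := U_X x Ux.
pose K := N + n.
pose t j := (x (K.+1 + j)).1.
have [c [Gc neq_ct]] : exists c, Gamma_inf ((x K).2 (K + L.+1)) c /\ c <> t.
  have [a [b [neq_ab [Ga Gb]]]] := condI ((x K).2 (K + L.+1)).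
  case: (classic (a = t)) => [eq_at|]; last by exists a.
  by exists b; split=> // eq_bt; apply: neq_ab; rewrite eq_at eq_bt.
have [y [Xy near_xy yc]] := X_L_redirect Xx Gc.
have [_ yper] : X_mn m n y.
  by apply/U_X/nearU => // i ltiN; apply: near_xy; lia.
have same_labels : (fun i => (y i).1) =1 (fun i => (x i).1).
  apply: (periodic_eq_of_prefix (K := K) ltmn); first by lia.
  - by move=> j; rewrite (iter_sigmaL_eq yper).
  - by move=> j; rewrite (iter_sigmaL_eq xper).
  - by move=> i leiK; have [] := near_xy i leiK.
by apply/neq_ct/functional_extensionality => j; rewrite -yc same_labels.
Qed.

End LambdaGraphSystem.

Theorem mainTheorem1 (Sigma : finType) (g : lgraph Sigma) :
  is_lambda_graph_system g -> left_resolving g -> condition_I g ->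
  essentially_free g.
Proof.
move=> lgs lres condI m n neq_mn.
case: (ltngtP m n) => [ltmn|ltnm|eq_mn]; last by case: neq_mn.
- exact: X_mn_empty_interior_lt.
- move=> U U_open U_X; apply: (X_mn_empty_interior_lt lgs lres condI ltnm U_open).
  by move=> x /U_X[Xx per]; split.
Qed.
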